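(* Let $\mathcal N$ be a real normed space with norm $\|\cdot\|$ and origin $o$. Let $v_1,v_2\in\mathcal N$ and $\lambda_1,\lambda_2\geq 0$ be such that $\max\{\lambda_1,\lambda_2\}\geq 1$, $v_1\notin\operatorname{int}B(v_2,\lambda_2)$, $v_2\notin\operatorname{int}B(v_1,\lambda_1)$, and $B(v_i,\lambda_i)\cap B(o,1)\neq\emptyset$ for $i=1,2$. Define $\pi\colon\mathcal N\to B(o,2)$ by $\pi(x)=x$ if $\|x\|\leq 2$ and $\pi(x)=\frac{2}{\|x\|}x$ if $\|x\|\geq 2$. Then $\|\pi(v_1)-\pi(v_2)\|\geq 1$.
   Context: For $c\in\mathcal N$ and $r\geq 0$, $B(c,r)=\{x\in\mathcal N:\|x-c\|\leq r\}$ denotes the closed ball and $\operatorname{int}B(c,r)$ its interior. *)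

From HB Require Import structures.
From mathcomp Require Import all_boot all_order all_algebra.
From mathcomp Require Import all_classical all_reals all_analysis.
Set Implicit Arguments. Unset Strict Implicit. Unset Printing Implicit Defensive.
Import Order.TTheory GRing.Theory Num.Theory.
Import numFieldNormedType.Exports.
Local Open Scope classical_set_scope.
Local Open Scope ring_scope.

Definition cball {R : realType} {N : normedModType R} (c : N) (r : R) : set N :=
  [set x | `|x - c| <= r].

Definition proj2 {R : realType} {N : normedModType R} (x : N) : N :=
  if `|x| <= 2 then x else (2 / `|x|) *: x.

From HB Require Import structures.
From mathcomp Require Import all_boot all_order all_algebra.
From mathcomp Require Import all_classical all_reals all_analysis.
From mathcomp Require Import lra.
Import Order.TTheory GRing.Theory Num.Theory.
Import numFieldNormedType.Exports.
Local Open Scope classical_set_scope.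
Local Open Scope ring_scope.

(* The hypotheses only enter through three inequalities: [1 <= |v1 - v2|] and
   [|vi| <= 1 + |v1 - v2|] for [i = 1, 2], since each ball [B(vi, li)] meets the
   unit ball and has radius at most [|v1 - v2|].  Moving a point [y] radially
   inwards to norm [s] moves it by exactly [|y| - s], so by the triangle
   inequality projecting cannot shrink the distance below [1]; when both points
   are projected, one first rescales the longer to the norm of the shorter and
   then uses homogeneity. *)

Section NormedSpace.
Context {R : realType} {N : normedModType R}.
Implicit Types (x y c : N) (r s : R).

Lemma cball_not_interior_dist x c r : ~ interior (cball c r) x -> r <= `|x - c|.
Proof.
move=> xNint; rewrite leNgt; apply/negP => ltxc; apply: xNint.
apply/nbhs_ballP; exists (r - `|x - c|); first by rewrite /= subr_gt0.
move=> z; rewrite -ball_normE /ball_ /= /cball => xz.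
by have := ler_distD x z c; rewrite /= [`|z - x|]distrC; lra.
Qed.

Lemma cball_meets_unit_ball_norm c r :
  cball c r `&` cball 0 1 !=set0 -> `|c| <= 1 + r.
Proof.
move=> [x []]; rewrite /cball /= subr0 => xc x1.
by have := ler_distD x c 0; rewrite !subr0 distrC; lra.
Qed.

Lemma dist_scale_radial y s : 0 < s <= `|y| -> `|y - (s / `|y|) *: y| = `|y| - s.
Proof.
case/andP=> s_gt0 s_le; have y_gt0 : 0 < `|y| by lra.
rewrite -{1}[y]scale1r -scalerBl normrZ ger0_norm; last first.
  by rewrite subr_ge0 ler_pdivrMr // mul1r.
by rewrite mulrBl mul1r divfK ?gt_eqF.
Qed.

Lemma dist_scale_radial_ge x y s :
  0 < s <= `|y| -> `|x - y| - (`|y| - s) <= `|x - (s / `|y|) *: y|.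
Proof.
move=> /dist_scale_radial yy'.
by have := ler_distD ((s / `|y|) *: y) x y; rewrite [`|_ *: y - y|]distrC yy'; lra.
Qed.

Lemma dist_ball_rescaled_ge1 x y : `|x| <= 2 < `|y| -> `|y| <= 1 + `|x - y| ->
  1 <= `|x - (2 / `|y|) *: y|.
Proof.
move=> /andP[x_le y_gt] y_le.
by have := @dist_scale_radial_ge x y 2; rewrite ltr0n ltW //=; lra.
Qed.

Lemma dist_rescaled_ge1 x y : 2 < `|x| <= `|y| -> `|y| <= 1 + `|x - y| ->
  1 <= `|(2 / `|x|) *: x - (2 / `|y|) *: y|.
Proof.
move=> /andP[x_gt xy] y_le; have x_gt0 : 0 < `|x| by lra.
have -> : (2 / `|x|) *: x - (2 / `|y|) *: y =
          (2 / `|x|) *: (x - (`|x| / `|y|) *: y).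
  by rewrite scalerBr scalerA mulrA divfK ?gt_eqF.
rewrite normrZ ger0_norm ?divr_ge0 ?(ltW x_gt0) // mulrAC ler_pdivlMr // mul1r.
by have := @dist_scale_radial_ge x y `|x|; rewrite x_gt0 xy /=; lra.
Qed.

Lemma proj2_dist_ge1 x y : 1 <= `|x - y| ->
  `|x| <= 1 + `|x - y| -> `|y| <= 1 + `|x - y| -> 1 <= `|proj2 x - proj2 y|.
Proof.
wlog xy : x y / `|x| <= `|y| => [hwlog|] d_ge1 x_le y_le.
  have [|yx] := lerP `|x| `|y|; first by move/hwlog; apply.
  by rewrite distrC; apply: hwlog; rewrite 1?distrC // ltW.
rewrite /proj2; have [y_le2|y_gt2] := lerP `|y| 2.
  by rewrite (le_trans xy y_le2).
have [x_le2|x_gt2] := lerP `|x| 2.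
  by apply: dist_ball_rescaled_ge1; rewrite ?x_le2.
by apply: dist_rescaled_ge1; rewrite ?x_gt2.
Qed.

End NormedSpace.

Theorem mainTheorem3 (R : realType) (N : normedModType R) (v1 v2 : N)
  (l1 l2 : R) (hl1 : 0 <= l1) (hl2 : 0 <= l2) (hmax : 1 <= Num.max l1 l2)
  (h1 : ~ interior (cball v2 l2) v1) (h2 : ~ interior (cball v1 l1) v2)
  (hi1 : cball v1 l1 `&` cball 0 1 !=set0)
  (hi2 : cball v2 l2 `&` cball 0 1 !=set0) :
  1 <= `|proj2 v1 - proj2 v2|.
Proof.
have l2_le := cball_not_interior_dist _ _ _ h1.
have l1_le := cball_not_interior_dist _ _ _ h2; rewrite distrC in l1_le.
have v1_le := cball_meets_unit_ball_norm _ _ hi1.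
have v2_le := cball_meets_unit_ball_norm _ _ hi2.
have d_ge1 : 1 <= `|v1 - v2|.
  by apply: le_trans hmax _; rewrite ge_max l1_le l2_le.
apply: proj2_dist_ge1 => //.
- by apply: le_trans v1_le _; rewrite lerD2l.
- by apply: le_trans v2_le _; rewrite lerD2l.
Qed.
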